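(* Let $\alpha>2$ with $\alpha\notin\mathbb N$ and $\lfloor\alpha\rfloor$ even. Let $K_\alpha=\{\exp(2\ell\pi i/\alpha): \ell\in\mathbb Z,\ -\alpha/2<\ell\le \alpha/2\}$. Then for all $\lambda\in[\tfrac12,1]$ and $k\in\mathbb N$, \[ \sum_{\omega\in K_\alpha}(1+\lambda\omega)^{\alpha k}\le \alpha(1+\lambda)^{\alpha k}, \] where the (real-valued) left-hand side uses the principal branch $z^{\alpha k}=\exp(\alpha k\operatorname{Log} z)$. *)

From Stdlib Require Import Reals Lra ZArith List.
From Coquelicot Require Import Coquelicot.
Open Scope R_scope.

Definition Cexp (z : C) : C :=
  (exp (Re z) * cos (Im z), exp (Re z) * sin (Im z)).

(* Principal argument in (-PI, PI] (standard atan2), 0 at z = 0. *)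
Definition Arg (z : C) : R :=
  let x := Re z in let y := Im z in
  if Rlt_dec 0 x then atan (y / x)
  else if Rlt_dec x 0 then
         (if Rle_dec 0 y then atan (y / x) + PI else atan (y / x) - PI)
  else if Rlt_dec 0 y then PI / 2
  else if Rlt_dec y 0 then - (PI / 2)
  else 0.

Definition Log (z : C) : C := (ln (Cmod z), Arg z).

Definition Cpow (z w : C) : C := Cexp (Cmult w (Log z)).

Definition K_idx (alpha : R) : list Z :=
  let N := up alpha in
  filter (fun l : Z =>
            if Rlt_dec (- (alpha / 2)) (IZR l) then
              (if Rle_dec (IZR l) (alpha / 2) then true else false)
            else false)
         (map (fun n : nat => (Z.of_nat n - N)%Z) (seq 0 (Z.to_nat (2 * N + 1)))).

Definition omega (alpha : R) (l : Z) : C :=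
  Cexp (0, 2 * IZR l * PI / alpha).

Definition K_sum (alpha lambda : R) (k : nat) : C :=
  fold_right Cplus (RtoC 0)
    (map (fun l => Cpow (Cplus (RtoC 1) (Cmult (RtoC lambda) (omega alpha l)))
                        (RtoC (alpha * INR k)))
         (K_idx alpha)).

(* Write [z_l = 1 + lambda exp(i theta_l)] with [theta_l = 2 l pi / alpha].  Since
   [floor alpha = 2m] and [alpha] is not an integer, [K_alpha] is indexed by
   [l = -m .. m] and every [theta_l] lies in [(-pi, pi)], so [Re z_l > 0] and the
   principal power is [|z_l|^a e^{i a atan(Im z_l / Re z_l)}] with [a = alpha k].
   Conjugate terms [l] and [-l] cancel in the imaginary part.  Each real part is at
   most [|z_l|^a <= (1 + lambda)^a]; for the two extreme indices [|theta_m| >= 2pi/3],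
   so [|z_m|^2 <= (1 + lambda)^2 / 3] and, as [a >= 2], these two terms contribute at
   most [(1 + lambda)^a / 3] each.  Altogether the real part is at most
   [(2m - 1/3) (1 + lambda)^a <= alpha (1 + lambda)^a]. *)

From Pilot Require Import Defs.
From Stdlib Require Import Reals Lra Lia ZArith List Permutation.
From Coquelicot Require Import Coquelicot.
Import ListNotations.
Open Scope R_scope.

Lemma one_plus_scal_Cexp_imag lam th :
  Cplus (RtoC 1) (Cmult (RtoC lam) (Defs.Cexp (0, th))) =
  (1 + lam * cos th, lam * sin th).
Proof. unfold Cplus, Cmult, Defs.Cexp, RtoC; simpl; rewrite exp_0; f_equal; ring. Qed.

Lemma Arg_pos_re x y : 0 < x -> Arg (x, y) = atan (y / x).
Proof. intro Hx; unfold Arg, Re, Im; simpl; destruct (Rlt_dec 0 x); [reflexivity | lra]. Qed.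

Lemma Cpow_pos_re x y a : 0 < x ->
  Defs.Cpow (x, y) (RtoC a) =
  (Rpower (Cmod (x, y)) a * cos (a * atan (y / x)),
   Rpower (Cmod (x, y)) a * sin (a * atan (y / x))).
Proof.
  intro Hx; unfold Defs.Cpow, Defs.Cexp, Log, Rpower, Cmult, RtoC.
  rewrite Arg_pos_re by exact Hx; simpl; f_equal; f_equal; f_equal; ring.
Qed.

Lemma Re_Cpow_pos_re_le x y a : 0 < x ->
  Re (Defs.Cpow (x, y) (RtoC a)) <= Rpower (Cmod (x, y)) a.
Proof.
  intro Hx; rewrite Cpow_pos_re by exact Hx; unfold Re; simpl.
  pose proof (COS_bound (a * atan (y / x))) as [_ Hcos].
  pose proof (exp_pos (a * ln (Cmod (x, y)))); unfold Rpower; nra.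
Qed.

Lemma Im_Cpow_conj_pos_re x y a : 0 < x ->
  Im (Defs.Cpow (x, - y) (RtoC a)) = - Im (Defs.Cpow (x, y) (RtoC a)).
Proof.
  intro Hx; rewrite !Cpow_pos_re by exact Hx; unfold Im; simpl.
  change (x, - y) with (Cconj (x, y)); rewrite Cmod_conj.
  replace (- y / x) with (- (y / x)) by (field; lra).
  rewrite atan_opp, Ropp_mult_distr_r_reverse, sin_neg; ring.
Qed.

(* Split [a = 2 + (a - 2)]: the square carries the factor [c], the rest only needs [r <= R]. *)
Lemma Rpower_le_scaled r R c a : 2 <= a -> 0 < r <= R -> r ^ 2 <= c * R ^ 2 ->
  Rpower r a <= c * Rpower R a.
Proof.
  intros Ha Hr Hsq.
  replace a with (INR 2 + (a - 2)) by (simpl; ring).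
  rewrite !Rpower_plus, !Rpower_pow by lra.
  assert (Hmono : Rpower r (a - 2) <= Rpower R (a - 2)) by (apply Rle_Rpower_l; lra).
  pose proof (exp_pos ((a - 2) * ln r)); unfold Rpower in *.
  apply Rle_trans with (c * R ^ 2 * exp ((a - 2) * ln r)); [nra|].
  assert (0 <= c * R ^ 2) by nra; nra.
Qed.

Lemma sqr_Cmod_one_plus lam th :
  Cmod (1 + lam * cos th, lam * sin th) ^ 2 = 1 + 2 * lam * cos th + lam ^ 2.
Proof.
  unfold Cmod; cbn [fst snd]; rewrite pow2_sqrt by (apply Rplus_le_le_0_compat; apply pow2_ge_0).
  pose proof (sin2_cos2 th) as H; unfold Rsqr in H; nra.
Qed.

Lemma Cmod_pos_re x y : 0 < x -> 0 < Cmod (x, y).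
Proof.
  intro Hx; pose proof (re_le_Cmod (x, y)) as H; unfold Re in H; simpl in H.
  rewrite Rabs_pos_eq in H; lra.
Qed.

Lemma one_plus_mul_cos_pos lam th : 0 <= lam <= 1 -> -1 < cos th -> 0 < 1 + lam * cos th.
Proof.
  intros Hlam Hcos; pose proof (COS_bound th) as [Hcos1 _].
  destruct (Rle_dec lam (1 / 2)); [nra|].
  assert (0 < lam * (1 + cos th)) by (apply Rmult_lt_0_compat; lra); nra.
Qed.

Lemma Cmod_one_plus_le lam th : 0 <= lam ->
  Cmod (1 + lam * cos th, lam * sin th) <= 1 + lam.
Proof.
  intros Hlam; pose proof (COS_bound th) as [_ Hcos].
  pose proof (sqr_Cmod_one_plus lam th) as Hsq.
  pose proof (Cmod_ge_0 (1 + lam * cos th, lam * sin th)); nra.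
Qed.

Lemma Re_Cpow_one_plus_le lam th a : 0 <= a -> 0 <= lam <= 1 -> -1 < cos th ->
  Re (Defs.Cpow (1 + lam * cos th, lam * sin th) (RtoC a)) <= Rpower (1 + lam) a.
Proof.
  intros Ha Hlam Hcos; pose proof (one_plus_mul_cos_pos lam th Hlam Hcos) as Hre.
  eapply Rle_trans; [apply Re_Cpow_pos_re_le, Hre|].
  apply Rle_Rpower_l; [exact Ha|].
  split; [apply Cmod_pos_re, Hre | apply Cmod_one_plus_le; lra].
Qed.

(* [|1 + lam e^{i th}|^2 <= (1 + lam)^2 / 3] reduces to [(2 lam - 1)(lam - 2) <= 0]. *)
Lemma Re_Cpow_one_plus_le_third lam th a : 2 <= a -> 1 / 2 <= lam <= 1 ->
  -1 < cos th <= - 1 / 2 ->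
  Re (Defs.Cpow (1 + lam * cos th, lam * sin th) (RtoC a)) <= Rpower (1 + lam) a / 3.
Proof.
  intros Ha Hlam Hcos.
  assert (Hre : 0 < 1 + lam * cos th) by (apply one_plus_mul_cos_pos; lra).
  eapply Rle_trans; [apply Re_Cpow_pos_re_le, Hre|].
  replace (Rpower (1 + lam) a / 3) with (/ 3 * Rpower (1 + lam) a) by field.
  apply Rpower_le_scaled; [exact Ha| |].
  - split; [apply Cmod_pos_re, Hre | apply Cmod_one_plus_le; lra].
  - rewrite sqr_Cmod_one_plus; nra.
Qed.

Lemma cos_gt_m1 th : - PI < th < PI -> -1 < cos th.
Proof.
  intro Hth; pose proof PI_RGT_0.
  assert (Hhalf : forall t, 0 <= t < PI -> -1 < cos t).
  { intros t Ht; rewrite <- cos_PI; apply cos_decreasing_1; lra. }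
  destruct (Rle_dec 0 th); [apply Hhalf; lra|].
  rewrite <- cos_neg; apply Hhalf; lra.
Qed.

Lemma cos_le_m_half th : 2 * PI / 3 <= th <= PI -> cos th <= - 1 / 2.
Proof.
  intro Hth; pose proof PI_RGT_0.
  assert (Hc : cos (2 * PI / 3) = - 1 / 2).
  { replace (2 * PI / 3) with (PI - PI / 3) by field.
    rewrite Rtrigo_facts.cos_pi_minus, cos_PI3; lra. }
  rewrite <- Hc; destruct (Req_dec th (2 * PI / 3)) as [->|]; [lra|].
  left; apply cos_decreasing_1; lra.
Qed.

Fixpoint Zsym_range (n : nat) : list Z :=
  match n with
  | O => [0%Z]
  | S p => (- Z.of_nat n)%Z :: Zsym_range p ++ [Z.of_nat n]
  end.

Lemma In_Zsym_range n l : In l (Zsym_range n) <-> (- Z.of_nat n <= l <= Z.of_nat n)%Z.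
Proof.
  induction n as [|n IHn]; simpl; [split; [intros [<-|[]]; lia | left; lia]|].
  rewrite in_app_iff, IHn; simpl; lia.
Qed.

Lemma NoDup_Zsym_range n : NoDup (Zsym_range n).
Proof.
  induction n as [|n IHn]; simpl; [repeat constructor; auto|].
  constructor.
  - rewrite in_app_iff, In_Zsym_range; simpl; lia.
  - apply NoDup_app; [exact IHn | repeat constructor; auto|].
    intros l; rewrite In_Zsym_range; simpl; lia.
Qed.

Lemma length_Zsym_range n : length (Zsym_range n) = (2 * n + 1)%nat.
Proof. induction n as [|n IHn]; simpl; [reflexivity|]; rewrite length_app, IHn; simpl; lia. Qed.

Lemma In_K_idx alpha l : 0 < alpha ->
  In l (K_idx alpha) <-> - (alpha / 2) < IZR l <= alpha / 2.
Proof.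
  intro Ha; unfold K_idx; rewrite filter_In, in_map_iff.
  destruct (archimed alpha) as [Hup _].
  split.
  - intros [_ Hf].
    destruct (Rlt_dec _ _); [|discriminate].
    destruct (Rle_dec _ _); [lra | discriminate].
  - intros [Hlo Hhi]; split.
    + assert (IZR (- up alpha) < IZR l /\ IZR l < IZR (up alpha)) as [Hl1 Hl2]
        by (rewrite opp_IZR; lra).
      apply lt_IZR in Hl1, Hl2.
      exists (Z.to_nat (l + up alpha)); split; [lia|]; apply in_seq; lia.
    + destruct (Rlt_dec _ _); [|lra]; destruct (Rle_dec _ _); [reflexivity | lra].
Qed.

Lemma K_idx_Permutation alpha n : 2 * INR n < alpha < 2 * INR n + 1 ->
  Permutation (K_idx alpha) (Zsym_range n).
Proof.
  intro Hn; pose proof (pos_INR n).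
  apply NoDup_Permutation; [|apply NoDup_Zsym_range|].
  - unfold K_idx; apply NoDup_filter, FinFun.Injective_map_NoDup; [|apply seq_NoDup].
    intros x y Hxy; lia.
  - intro l; rewrite In_K_idx, In_Zsym_range, INR_IZR_INZ in * by lra.
    split.
    + intros [Hlo Hhi].
      assert (IZR (- Z.of_nat n - 1) < IZR l /\ IZR l < IZR (Z.of_nat n + 1)) as [H1 H2]
        by (rewrite minus_IZR, opp_IZR, plus_IZR; lra).
      apply lt_IZR in H1, H2; lia.
    + intros Hl; assert (IZR (- Z.of_nat n) <= IZR l <= IZR (Z.of_nat n)) as [H1 H2]
        by (split; apply IZR_le; lia).
      rewrite opp_IZR in H1; lra.
Qed.

Lemma even_Int_part_bounds alpha : 2 < alpha -> ~ (exists n : nat, alpha = INR n) ->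
  Z.Even (Int_part alpha) -> exists n : nat, 2 * INR (S n) < alpha < 2 * INR (S n) + 1.
Proof.
  intros Ha Hnotnat [m Hm].
  destruct (base_Int_part alpha) as [Hb1 Hb2]; rewrite Hm, mult_IZR in Hb1, Hb2.
  assert (Hm1 : (0 < m)%Z) by (apply lt_IZR; simpl in *; lra).
  exists (Z.to_nat (m - 1)).
  rewrite INR_IZR_INZ, Nat2Z.inj_succ, Z2Nat.id, <- Z.add_1_r, Z.sub_add by lia.
  split; [|lra].
  destruct Hb1 as [Hlt | Heq]; [exact Hlt|].
  exfalso; apply Hnotnat; exists (Z.to_nat (2 * m)).
  rewrite INR_IZR_INZ, Z2Nat.id, mult_IZR by lia; lra.
Qed.

Definition Rsum (L : list Z) (f : Z -> R) : R := fold_right (fun l acc => f l + acc) 0 L.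

Lemma Re_fold_Cplus (F : Z -> C) L :
  Re (fold_right Cplus (RtoC 0) (map F L)) = Rsum L (fun l => Re (F l)).
Proof. induction L as [|l L IHL]; simpl; [reflexivity|]; rewrite <- IHL; reflexivity. Qed.

Lemma Im_fold_Cplus (F : Z -> C) L :
  Im (fold_right Cplus (RtoC 0) (map F L)) = Rsum L (fun l => Im (F l)).
Proof. induction L as [|l L IHL]; simpl; [reflexivity|]; rewrite <- IHL; reflexivity. Qed.

Lemma Rsum_Permutation L1 L2 f : Permutation L1 L2 -> Rsum L1 f = Rsum L2 f.
Proof. induction 1; simpl; lra. Qed.

Lemma Rsum_app L1 L2 f : Rsum (L1 ++ L2) f = Rsum L1 f + Rsum L2 f.
Proof. induction L1; simpl; lra. Qed.

Lemma Rsum_le_const L f B : (forall l, In l L -> f l <= B) -> Rsum L f <= INR (length L) * B.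
Proof.
  induction L as [|l L IHL]; intros Hf; simpl Rsum; simpl length; [simpl; lra|].
  rewrite S_INR; pose proof (Hf l (or_introl eq_refl)).
  pose proof (IHL (fun l' Hl' => Hf l' (or_intror Hl'))); lra.
Qed.

Lemma Rsum_Zsym_range_S n f :
  Rsum (Zsym_range (S n)) f = f (- Z.of_nat (S n))%Z + Rsum (Zsym_range n) f + f (Z.of_nat (S n)).
Proof. cbn [Zsym_range]; simpl Rsum at 1; rewrite Rsum_app; simpl; lra. Qed.

Lemma Rsum_Zsym_range_odd n f :
  (forall l, (- Z.of_nat n <= l <= Z.of_nat n)%Z -> f (- l)%Z = - f l) ->
  Rsum (Zsym_range n) f = 0.
Proof.
  induction n as [|n IHn]; intros Hodd.
  - simpl; pose proof (Hodd 0%Z ltac:(lia)); simpl in *; lra.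
  - rewrite Rsum_Zsym_range_S, IHn by (intros l Hl; apply Hodd; lia).
    rewrite (Hodd (Z.of_nat (S n))) by lia; lra.
Qed.

Definition K_angle (alpha : R) (l : Z) : R := 2 * IZR l * PI / alpha.

Lemma K_sum_fold alpha lambda k :
  K_sum alpha lambda k =
  fold_right Cplus (RtoC 0)
    (map (fun l => Defs.Cpow (1 + lambda * cos (K_angle alpha l), lambda * sin (K_angle alpha l))
                             (RtoC (alpha * INR k)))
         (K_idx alpha)).
Proof.
  unfold K_sum, omega; f_equal; apply map_ext; intro l.
  rewrite one_plus_scal_Cexp_imag; reflexivity.
Qed.

Lemma K_angle_opp alpha l : K_angle alpha (- l) = - K_angle alpha l.
Proof. unfold K_angle, Rdiv; rewrite opp_IZR; ring. Qed.

Section KTerms.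

Variables (alpha lambda a : R) (n : nat).
Hypothesis Halpha : 2 * INR (S n) < alpha < 2 * INR (S n) + 1.
Hypothesis Hlam : 1 / 2 <= lambda <= 1.

Let term (l : Z) : C :=
  Defs.Cpow (1 + lambda * cos (K_angle alpha l), lambda * sin (K_angle alpha l)) (RtoC a).

Lemma K_angle_bounds l : (- Z.of_nat (S n) <= l <= Z.of_nat (S n))%Z ->
  - PI < K_angle alpha l < PI.
Proof.
  intro Hl; pose proof PI_RGT_0; pose proof (pos_INR (S n)).
  assert (IZR (- Z.of_nat (S n)) <= IZR l <= IZR (Z.of_nat (S n))) as [H1 H2]
    by (split; apply IZR_le; lia).
  rewrite opp_IZR, <- INR_IZR_INZ in H1; rewrite <- INR_IZR_INZ in H2.
  set (r := 2 * IZR l / alpha).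
  assert (Hr : r * alpha = 2 * IZR l) by (unfold r; field; lra).
  replace (K_angle alpha l) with (r * PI) by (unfold K_angle, r; field; lra).
  assert (-1 < r < 1) by nra; nra.
Qed.

(* [alpha < 2 (n + 1) + 1] puts the outermost angle within [pi/3] of [pi]. *)
Lemma K_angle_outermost : 2 * PI / 3 <= K_angle alpha (Z.of_nat (S n)) <= PI.
Proof.
  pose proof PI_RGT_0; pose proof (pos_INR n); rewrite S_INR in Halpha.
  set (r := 2 * IZR (Z.of_nat (S n)) / alpha).
  assert (Hr : r * alpha = 2 * (INR n + 1)) by (unfold r; rewrite <- INR_IZR_INZ, S_INR; field; lra).
  replace (K_angle alpha _) with (r * PI) by (unfold K_angle, r; field; lra).
  assert (2 / 3 <= r <= 1) by nra; nra.
Qed.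

Lemma Im_K_terms_sum : Rsum (Zsym_range (S n)) (fun l => Im (term l)) = 0.
Proof.
  apply Rsum_Zsym_range_odd; intros l Hl; unfold term.
  rewrite K_angle_opp, cos_neg, sin_neg, <- Ropp_mult_distr_r.
  apply Im_Cpow_conj_pos_re, one_plus_mul_cos_pos; [lra|].
  apply cos_gt_m1, K_angle_bounds, Hl.
Qed.

Lemma Re_K_terms_sum_le : 2 <= a ->
  Rsum (Zsym_range (S n)) (fun l => Re (term l)) <= alpha * Rpower (1 + lambda) a.
Proof.
  intro Ha; set (B := Rpower (1 + lambda) a).
  assert (Hcos_outer : -1 < cos (K_angle alpha (Z.of_nat (S n))) <= - 1 / 2).
  { split; [apply cos_gt_m1, K_angle_bounds; lia | apply cos_le_m_half, K_angle_outermost]. }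
  assert (Hright : Re (term (Z.of_nat (S n))) <= B / 3)
    by (apply Re_Cpow_one_plus_le_third; lra).
  assert (Hleft : Re (term (- Z.of_nat (S n))%Z) <= B / 3).
  { apply Re_Cpow_one_plus_le_third; [lra | lra |].
    rewrite K_angle_opp, cos_neg; exact Hcos_outer. }
  assert (Hinner : Rsum (Zsym_range n) (fun l => Re (term l)) <= INR (2 * n + 1) * B).
  { rewrite <- length_Zsym_range; apply Rsum_le_const; intros l Hl.
    apply Re_Cpow_one_plus_le; [lra | lra |].
    apply cos_gt_m1, K_angle_bounds; rewrite In_Zsym_range in Hl; lia. }
  assert (HB : 0 < B) by apply exp_pos.
  rewrite Rsum_Zsym_range_S; rewrite plus_INR, mult_INR, S_INR in *; simpl INR in *; nra.
Qed.

End KTerms.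

Theorem lemma6p1 (alpha : R) (Halpha : 2 < alpha)
  (Hnotnat : ~ (exists n : nat, alpha = INR n))
  (Heven : Z.Even (Int_part alpha))
  (lambda : R) (Hlam : 1 / 2 <= lambda <= 1)
  (k : nat) (Hk : (1 <= k)%nat) :
  Im (K_sum alpha lambda k) = 0 /\
  Re (K_sum alpha lambda k) <= alpha * Rpower (1 + lambda) (alpha * INR k).
Proof.
  destruct (even_Int_part_bounds alpha Halpha Hnotnat Heven) as [n Hn].
  assert (Ha : 2 <= alpha * INR k).
  { apply le_INR in Hk; simpl in Hk; nra. }
  rewrite K_sum_fold, Im_fold_Cplus, Re_fold_Cplus,
    !(Rsum_Permutation _ _ _ (K_idx_Permutation alpha (S n) Hn)).
  split; [apply Im_K_terms_sum | apply Re_K_terms_sum_le]; assumption.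
Qed.
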